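(* Assume all struts are straight, let $k\ge0$ and $n=k+1$. Then there exists a constant $k_d>0$ (possibly depending on $V_k$ and $M_n$) such that \[ \inf_{\psi\in M_n\setminus\{0\}}\ \sup_{\Sigma\in V_k\setminus\{0\}}\frac{b(\Sigma,\psi)}{\|\Sigma\|_{V}\|\psi\|_{M}}\ge k_d . \]
   Context: Network: a stent is modelled by a finite connected graph with vertices $j=1,\dots,n_{\mathcal V}$ and oriented edges $i=1,\dots,n_{\mathcal E}$. $J_j^-$ ($J_j^+$) is the set of edges leaving (entering) vertex $j$. Edge $i$ is a straight segment of length $\ell^i>0$, parametrized by $\Phi^i(s)=\Phi^i(0)+s\,t^i$, $s\in[0,\ell^i]$, with constant unit tangent $t^i$; $s=0$ at the vertex it leaves, $s=\ell^i$ at the vertex it enters. Matrices: $A^+_{I}\in\mathbb{R}^{3n_{\mathcal V}\times 3n_{\mathcal E}}$ has $3\times3$ block $I_3$ in block row $j$, block column $i$ if $i\in J_j^+$ and $0$ otherwise; $A^-_I$ likewise with $J_j^-$. Spaces: $L^2(\mathcal N;\mathbb{R}^3)=\prod_iL^2(0,\ell^i;\mathbb{R}^3)$, $L^2_{H^1}(\mathcal N;\mathbb{R}^3)=\prod_iH^1(0,\ell^i;\mathbb{R}^3)$, product norms; $\int_{\mathcal N}v=\sum_i\int_0^{\ell^i}v^i\,ds$. $V=L^2(\mathcal N;\mathbb{R}^3)^2\times(\mathbb{R}^{3n_{\mathcal E}})^4\times\mathbb{R}^3\times\mathbb{R}^3$ with elements $\Sigma=(q,p,P_+,P_-,Q_+,Q_-,\alpha,\beta)$,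 $M=L^2_{H^1}(\mathcal N;\mathbb{R}^3)^2\times\mathbb{R}^{3n_{\mathcal V}}\times\mathbb{R}^{3n_{\mathcal V}}$ with elements $\psi=(v,w,V,W)$, product Hilbert norms. $P_m(\mathcal N)$ = functions that on each edge are polynomials of degree at most $m$ (no continuity at vertices); $V_k=P_k(\mathcal N)^3\times P_k(\mathcal N)^3\times(\mathbb{R}^{3n_{\mathcal E}})^4\times\mathbb{R}^3\times\mathbb{R}^3\subset V$, $M_n=P_n(\mathcal N)^3\times P_n(\mathcal N)^3\times\mathbb{R}^{3n_{\mathcal V}}\times\mathbb{R}^{3n_{\mathcal V}}\subset M$ with the induced norms. $b(\Sigma,\psi)=\sum_i\int_0^{\ell^i}\big(-p^i\cdot(\partial_sv^i+t^i\times w^i)-q^i\cdot\partial_sw^i\big)ds+\sum_i\big(P^i_+\cdot v^i(\ell^i)-P^i_-\cdot v^i(0)\big)+\sum_i\big(Q^i_+\cdot w^i(\ell^i)-Q^i_-\cdot w^i(0)\big)-(A^+_IP_+-A^-_IP_-)\cdot V-(A^+_IQ_+-A^-_IQ_-)\cdot W+\alpha\cdot\int_{\mathcal N}v+\beta\cdot\int_{\mathcal N}w$. *)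

From HB Require Import structures.
From mathcomp Require Import all_boot all_order all_algebra.
From mathcomp Require Import all_classical all_reals all_analysis.
Set Implicit Arguments. Unset Strict Implicit. Unset Printing Implicit Defensive.
Import Order.TTheory GRing.Theory Num.Theory.
Import numFieldNormedType.Exports.
Local Open Scope classical_set_scope.
Local Open Scope ring_scope.

Section Stent.
Variable R : realType.

Definition dot3 (u v : 'rV[R]_3) : R := \sum_(c < 3) u 0 c * v 0 c.
Definition cross3 (u v : 'rV[R]_3) : 'rV[R]_3 :=
  let x := fun j : nat => u 0 (inord j) in
  let y := fun j : nat => v 0 (inord j) in
  \row_(c < 3) [:: x 1%N * y 2%N - x 2%N * y 1%N;
                   x 2%N * y 0%N - x 0%N * y 2%N;
                   x 0%N * y 1%N - x 1%N * y 0%N]`_c.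
Definition sqn3 (u : 'rV[R]_3) : R := dot3 u u.

Definition vpoly := 'I_3 -> {poly R}.
Definition veval (f : vpoly) (s : R) : 'rV[R]_3 := \row_(c < 3) (f c).[s].
Definition vderiv (f : vpoly) : vpoly := fun c => (f c)^`().
Definition vdeg_le (m : nat) (f : vpoly) : Prop := forall c, (size (f c) <= m.+1)%N.

Definition Int0 (l : R) (g : R -> R) : R :=
  \int[@lebesgue_measure R]_(s in `[0, l]) g s.
Definition vInt0 (l : R) (f : vpoly) : 'rV[R]_3 :=
  \row_(c < 3) Int0 l (fun s => (f c).[s]).
Definition L2sq (l : R) (f : vpoly) : R := Int0 l (fun s => sqn3 (veval f s)).
Definition H1sq (l : R) (f : vpoly) : R := L2sq l f + L2sq l (vderiv f).

Record Vel (nE : nat) := mkVel {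
  Vq : 'I_nE -> vpoly; Vp : 'I_nE -> vpoly;
  VPp : 'I_nE -> 'rV[R]_3; VPm : 'I_nE -> 'rV[R]_3;
  VQp : 'I_nE -> 'rV[R]_3; VQm : 'I_nE -> 'rV[R]_3;
  Valpha : 'rV[R]_3; Vbeta : 'rV[R]_3 }.

Record Mel (nV nE : nat) := mkMel {
  Mv : 'I_nE -> vpoly; Mw : 'I_nE -> vpoly;
  MV : 'I_nV -> 'rV[R]_3; MW : 'I_nV -> 'rV[R]_3 }.

Definition in_Vk (k : nat) nE (S : Vel nE) : Prop :=
  forall i, vdeg_le k (Vq S i) /\ vdeg_le k (Vp S i).
Definition in_Mn (n : nat) nV nE (P : Mel nV nE) : Prop :=
  forall i, vdeg_le n (Mv P i) /\ vdeg_le n (Mw P i).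

Definition Vzero nE (S : Vel nE) : Prop :=
  (forall i c, Vq S i c = 0) /\ (forall i c, Vp S i c = 0) /\
  (forall i, VPp S i = 0) /\ (forall i, VPm S i = 0) /\
  (forall i, VQp S i = 0) /\ (forall i, VQm S i = 0) /\
  Valpha S = 0 /\ Vbeta S = 0.
Definition Mzero nV nE (P : Mel nV nE) : Prop :=
  [/\ forall i c, Mv P i c = 0, forall i c, Mw P i c = 0,
      forall j, MV P j = 0 & forall j, MW P j = 0].

Definition normV nE (ell : 'I_nE -> R) (S : Vel nE) : R :=
  Num.sqrt (\sum_i (L2sq (ell i) (Vq S i) + L2sq (ell i) (Vp S i))
          + \sum_i (sqn3 (VPp S i) + sqn3 (VPm S i) + sqn3 (VQp S i) + sqn3 (VQm S i))
          + sqn3 (Valpha S) + sqn3 (Vbeta S)).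
Definition normM nV nE (ell : 'I_nE -> R) (P : Mel nV nE) : R :=
  Num.sqrt (\sum_i (H1sq (ell i) (Mv P i) + H1sq (ell i) (Mw P i))
          + \sum_j (sqn3 (MV P j) + sqn3 (MW P j))).

(* src i = vertex edge i leaves (i in J^-_{src i}), tgt i = vertex it enters (i in J^+_{tgt i}) *)
Definition Aplus nV nE (tgt : 'I_nE -> 'I_nV) (P : 'I_nE -> 'rV[R]_3) (j : 'I_nV) :=
  \sum_(i | tgt i == j) P i.
Definition Aminus nV nE (src : 'I_nE -> 'I_nV) (P : 'I_nE -> 'rV[R]_3) (j : 'I_nV) :=
  \sum_(i | src i == j) P i.

Definition bform nV nE (src tgt : 'I_nE -> 'I_nV) (ell : 'I_nE -> R)
    (t : 'I_nE -> 'rV[R]_3) (S : Vel nE) (P : Mel nV nE) : R :=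
  \sum_i Int0 (ell i) (fun s =>
      - dot3 (veval (Vp S i) s)
             (veval (vderiv (Mv P i)) s + cross3 (t i) (veval (Mw P i) s))
      - dot3 (veval (Vq S i) s) (veval (vderiv (Mw P i)) s))
  + \sum_i (dot3 (VPp S i) (veval (Mv P i) (ell i)) - dot3 (VPm S i) (veval (Mv P i) 0))
  + \sum_i (dot3 (VQp S i) (veval (Mw P i) (ell i)) - dot3 (VQm S i) (veval (Mw P i) 0))
  - \sum_j dot3 (Aplus tgt (VPp S) j - Aminus src (VPm S) j) (MV P j)
  - \sum_j dot3 (Aplus tgt (VQp S) j - Aminus src (VQm S) j) (MW P j)
  + dot3 (Valpha S) (\sum_i vInt0 (ell i) (Mv P i))
  + dot3 (Vbeta S) (\sum_i vInt0 (ell i) (Mw P i)).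

Definition adj nV nE (src tgt : 'I_nE -> 'I_nV) : rel 'I_nV :=
  fun u v => [exists i, ((src i == u) && (tgt i == v)) || ((src i == v) && (tgt i == u))].
Definition graph_connected nV nE (src tgt : 'I_nE -> 'I_nV) : Prop :=
  forall u v, connect (adj src tgt) u v.

(* straight struts: edge i is the segment Phi^i(s) = X(src i) + s t^i, s in [0, ell i],
   with unit tangent t^i, ell i > 0, ending at X(tgt i) *)
Definition straight_struts nV nE (src tgt : 'I_nE -> 'I_nV) (X : 'I_nV -> 'rV[R]_3)
    (ell : 'I_nE -> R) (t : 'I_nE -> 'rV[R]_3) : Prop :=
  forall i, [/\ 0 < ell i, sqn3 (t i) = 1 & X (tgt i) = X (src i) + ell i *: t i].

Definition sup_ratio (k : nat) nV nE (src tgt : 'I_nE -> 'I_nV) (ell : 'I_nE -> R)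
    (t : 'I_nE -> 'rV[R]_3) (P : Mel nV nE) : \bar R :=
  ereal_sup [set ((bform src tgt ell t S P) / (normV ell S * normM ell P))%:E
            | S in [set S : Vel nE | in_Vk k S /\ ~ Vzero S]].

End Stent.

(* V_k and M_{k+1} are finite-dimensional, so it suffices to find finitely many test
   elements of V_k whose pairings with psi control ||psi||_M.  We test b against the
   canonical basis of V_k: a monomial X^m e_c (m <= k) in p or q on one edge, a unit
   vector in one boundary value P^i_+-, Q^i_+-, or in alpha, beta.  For
   psi = (v, w, V, W) these pairings are the moments of w' and of v' + t x w against
   P_k, the jumps between edge ends and vertex values, and the means of v and w.  If
   they all vanish, then w' is orthogonal to P_k and of degree <= k, so w' = 0; the
   jump conditions make w equal to W at both ends of every edge, hence constant on the
   connected network, and the zero mean forces w = W = 0; then the same argument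
   applies to v, since t x w = 0.  The pairings thus form an injective linear map on
   the coefficients of psi, so ||psi||_M <= D max_j |b(e_j, psi)|, and testing with
   the maximizing +-e_j gives k_d = 1 / (D max_j ||e_j||_V). *)

From HB Require Import structures.
From mathcomp Require Import all_boot all_order all_algebra.
From mathcomp Require Import all_classical all_reals all_analysis.
From mathcomp Require Import polyorder lra ring.
Import Order.TTheory GRing.Theory Num.Theory.
Import numFieldNormedType.Exports.
Local Open Scope classical_set_scope.
Local Open Scope ring_scope.
Set Implicit Arguments. Unset Strict Implicit.

Lemma ler_psum_term (R : numDomainType) (T : finType) (F : T -> R) :
  (forall z, 0 <= F z) -> forall z, F z <= \sum_z F z.
Proof. by move=> F_ge0 z; rewrite (bigD1 z) //= lerDl sumr_ge0. Qed.

Lemma invf_le_ratio (R : realFieldType) (x y z X Y : R) :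
  0 < x <= X -> 0 < Y -> 0 < y <= Y * z -> (X * Y)^-1 <= z / (x * y).
Proof.
move=> /andP[x_gt0 x_le] Y_gt0 /andP[y_gt0 y_le].
have XY_gt0 : 0 < X * Y by rewrite mulr_gt0 // (lt_le_trans x_gt0 x_le).
have xy_le : x * y <= X * Y * z by nra.
rewrite ler_pdivlMr ?mulr_gt0 // -[z](mulKf (lt0r_neq0 XY_gt0)) ler_wpM2l //.
by rewrite invr_ge0 ltW.
Qed.

Section PolyFacts.
Variable R : realFieldType.

Lemma poly_combination n (f g : nat -> R) a :
  \poly_(m < n) (a * f m + g m) = a *: \poly_(m < n) f m + \poly_(m < n) g m.
Proof.
apply/polyP => m; rewrite coefD coefZ !coef_poly.
by case: ltnP => _ //; rewrite mulr0 addr0.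
Qed.

Lemma size_deriv_leq (p : {poly R}) n : (size p <= n.+1)%N -> (size p^`() <= n)%N.
Proof. by rewrite size_deriv; case: (size p). Qed.

Lemma deriv_eq0_polyC (p : {poly R}) : p^`() = 0 -> p = (p`_0)%:P.
Proof.
move=> p'0; apply: size1_polyC; have := size_deriv p.
by rewrite p'0 size_poly0; case: (size p) => [|[]].
Qed.

Lemma horner_coef_bound (p : {poly R}) n B L s : (size p <= n)%N ->
  (forall i, `|p`_i| <= B) -> 0 <= s <= L -> 1 <= L -> `|p.[s]| <= n%:R * B * L ^+ n.
Proof.
move=> p_n p_B /andP[s_ge0 s_L] L_ge1.
rewrite (horner_coef_wide s p_n); apply: le_trans (ler_norm_sum _ _ _) _.
have term_bound (i : 'I_n) : `|p`_i * s ^+ i| <= B * L ^+ n.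
  rewrite normrM normrX (ger0_norm s_ge0); apply: ler_pM => //; first exact: exprn_ge0.
  apply: le_trans (_ : L ^+ i <= _); first by apply: lerXn2r; rewrite ?nnegrE //; lra.
  exact: ler_weXn2l (ltnW (ltn_ord i)).
apply: le_trans (ler_sum _ (fun i _ => term_bound i)) _.
by rewrite sumr_const card_ord -[_ *+ n]mulr_natl mulrA.
Qed.

Lemma deriv_coef_bound (p : {poly R}) n B : (size p <= n)%N ->
  (forall i, `|p`_i| <= B) -> forall i, `|p^`()`_i| <= n%:R * B.
Proof.
move=> p_n p_B i; have B_ge0 : 0 <= B := le_trans (normr_ge0 _) (p_B 0%N).
rewrite coef_deriv -[p`_i.+1 *+ _]mulr_natl normrM normr_nat.
case: (leqP (size p) i.+1) => [p_i|i_p].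
  by rewrite nth_default // normr0 mulr0 mulr_ge0.
by rewrite ler_pM // ler_nat (ltnW (leq_trans i_p p_n)).
Qed.

End PolyFacts.

Section PolyIntegral.
Variable R : realType.
Notation mu := (@lebesgue_measure R).
Implicit Types (l : R) (p q r : {poly R}).

Lemma continuous_integrable_Int0 l (f : R -> R) : continuous f ->
  mu.-integrable `[0, l] (EFin \o f).
Proof.
move=> cf; apply: continuous_compact_integrable; first exact: segment_compact.
exact: continuous_subspaceT.
Qed.

Lemma Int0_gt0 l (s0 : R) (f : R -> R) : continuous f ->
  (forall s, 0 <= s <= l -> 0 <= f s) -> 0 < s0 < l -> 0 < f s0 -> 0 < Int0 l f.
Proof.
move=> cf f_ge0 /andP[s0_gt0 s0_lt] fs0_gt0; set c := f s0.
have c2_gt0 : 0 < c / 2 by rewrite /c; lra.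
have /cvgrPdist_lt/(_ _ c2_gt0)[d /= d_gt0 near_s0] := cf s0.
have f_gt : forall s, `|s0 - s| < d -> c / 2 < f s.
  move=> s /near_s0; rewrite -/c ltr_norml => /andP[_]; lra.
set e := Num.min (d / 2) (Num.min s0 (l - s0)).
have e_gt0 : 0 < e by rewrite !lt_min; apply/and3P; split; lra.
have [e_d [e_s0 e_l]] : [/\ e <= d / 2, e <= s0 & e <= l - s0].
  by rewrite !ge_min !lexx !orbT.
have [mf _] := integrableP _ _ _ (continuous_integrable_Int0 l cf).
have sub : `[s0 - e, s0 + e] `<=` `[0, l].
  by move=> x; rewrite /= !in_itv /= => /andP[? ?]; apply/andP; split; lra.
have lower : ((c / 2 * (2 * e))%:E <= \int[mu]_(x in `[0%R, l]) (f x)%:E)%E.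
  have f0 : forall x, `[0, l]%classic x -> (0 <= (EFin \o f) x)%E.
    by move=> x; rewrite /= in_itv /= => x0l; rewrite lee_fin f_ge0.
  apply: le_trans (ge0_subset_integral mu (measurable_itv _) (measurable_itv _) mf f0 sub).
  have -> : ((c / 2 * (2 * e))%:E = \int[mu]_(x in `[(s0 - e)%R, (s0 + e)%R]) (c / 2)%:E)%E.
    rewrite integral_cst //= lebesgue_measure_itv /= lte_fin.
    by rewrite ifT -?EFinD -?EFinM; [congr (_ * _)%:E; lra | lra].
  apply: ge0_le_integral => //; first by move=> x _; rewrite lee_fin; lra.
    exact: measurable_funS mf.
  move=> x; rewrite /= in_itv /= => /andP[? ?]; rewrite lee_fin ltW // f_gt //.
  by rewrite ltr_norml; apply/andP; split; lra.
have fin : (\int[mu]_(x in `[0%R, l]) (f x)%:E)%E \is a fin_num.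
  by apply: integrable_fin_num; [exact: measurable_itv | exact: continuous_integrable_Int0].
move: lower; rewrite -(fineK fin) lee_fin /Int0 /Rintegral.
by apply: lt_le_trans; apply: mulr_gt0; lra.
Qed.

Definition Ipoly l p : R := Int0 l (horner p).

Lemma integrable_horner l p : mu.-integrable `[0, l] (EFin \o horner p).
Proof. by apply: continuous_integrable_Int0 => x; exact: continuous_horner. Qed.

Lemma IpolyD l : {morph Ipoly l : p q / p + q}.
Proof.
move=> p q; rewrite /Ipoly /Int0 -RintegralD //; try exact: integrable_horner.
by apply: eq_Rintegral => x _; rewrite hornerD.
Qed.

Lemma IpolyZ l a p : Ipoly l (a *: p) = a * Ipoly l p.
Proof.
rewrite /Ipoly /Int0 -RintegralZl //; last exact: integrable_horner.
by apply: eq_Rintegral => x _; rewrite hornerZ.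
Qed.

Lemma Ipoly_is_linear l : linear (Ipoly l).
Proof. by move=> a p q; rewrite IpolyD IpolyZ. Qed.

HB.instance Definition _ l :=
  GRing.isLinear.Build R {poly R} R *%R (Ipoly l) (Ipoly_is_linear l).

Lemma Int0_Ipoly l (f : R -> R) p : (forall s, f s = p.[s]) -> Int0 l f = Ipoly l p.
Proof. by move=> fp; congr Int0; apply/funext. Qed.

Lemma Int0_eq0 l (f : R -> R) : (forall s, f s = 0) -> Int0 l f = 0.
Proof.
by move=> f0; rewrite (@Int0_Ipoly _ _ 0) ?linear0 // => s; rewrite f0 horner0.
Qed.

Lemma IpolyC l c : 0 <= l -> Ipoly l c%:P = c * l.
Proof.
move=> l_ge0; rewrite /Ipoly /Int0.
under eq_Rintegral do rewrite hornerC.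
rewrite Rintegral_cst //= lebesgue_measure_itv /= lte_fin.
case: ltP => [_|l_le0]; first by rewrite /= oppr0 addr0.
by have -> : l = 0 by apply/eqP; rewrite eq_le l_ge0 l_le0.
Qed.

Lemma Ipoly_le l p q : (forall s, 0 <= s <= l -> p.[s] <= q.[s]) -> Ipoly l p <= Ipoly l q.
Proof.
by move=> pq; apply: le_Rintegral => //; exact: integrable_horner.
Qed.

Lemma poly_neq0_interior l p : 0 < l -> p != 0 -> exists2 s, 0 < s < l & p.[s] != 0.
Proof.
move=> l_gt0 p_neq0.
pose pts := [seq l / (m.+2)%:R | m <- iota 0 (size p)].
have pts_uniq : uniq pts.
  rewrite map_inj_in_uniq ?iota_uniq // => a b _ _.
  by move/(mulfI (lt0r_neq0 l_gt0))/invr_inj/eqP; rewrite eqr_nat => /eqP[].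
have : ~~ all (root p) pts.
  apply/negP => /(max_poly_roots p_neq0)/(_ pts_uniq).
  by rewrite size_map size_iota ltnn.
case/allPn => _ /mapP[m _ ->] p_neq0_at; exists (l / (m.+2)%:R) => //.
by rewrite divr_gt0 ?ltr0n //= ltr_pdivrMr ?ltr0n // ltr_pMr // ltr1n.
Qed.

Lemma Ipoly_sqr_ge0 l p : 0 <= Ipoly l (p * p).
Proof. by apply: Rintegral_ge0 => s _; rewrite hornerM -expr2 sqr_ge0. Qed.

Lemma Ipoly_sqr_eq0 l p : 0 < l -> Ipoly l (p * p) = 0 -> p = 0.
Proof.
move=> l_gt0 I0; have [//|p_neq0] := eqVneq p 0.
have [s s_in ps_neq0] := poly_neq0_interior l_gt0 p_neq0.
suff : 0 < Ipoly l (p * p) by rewrite I0 ltxx.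
apply: (Int0_gt0 (s0 := s)) => //.
- by move=> x; exact: continuous_horner.
- by move=> x _; rewrite hornerM -expr2 sqr_ge0.
- by rewrite hornerM lt0r mulf_neq0 //= -expr2 sqr_ge0.
Qed.

Lemma Ipoly_orth_eq0 l n r : 0 < l -> (size r <= n)%N ->
  (forall m : 'I_n, Ipoly l ('X^m * r) = 0) -> r = 0.
Proof.
move=> l_gt0 r_n r_orth; apply: (Ipoly_sqr_eq0 l_gt0).
have -> : r * r = \sum_(m < n) r`_m *: ('X^m * r).
  under eq_bigr do rewrite scalerAl.
  rewrite -mulr_suml -poly_def; congr (_ * _); apply/polyP => i.
  rewrite coef_poly; case: ltnP => // n_le_i.
  by rewrite nth_default // (leq_trans r_n n_le_i).
by rewrite linear_sum big1 // => m _ /=; rewrite IpolyZ r_orth mulr0.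
Qed.

End PolyIntegral.

Section FiniteLinearAlgebra.
Variable R : realType.

Lemma row_free_l1_bound m n (A : 'M[R]_(m, n)) : row_free A ->
  exists2 C, 0 < C & forall v : 'rV_m, \sum_a `|v 0 a| <= C * \sum_b `|(v *m A) 0 b|.
Proof.
case/row_freeP => B AB.
pose MB := \sum_a \sum_b `|B b a|.
have MB_ge0 : 0 <= MB by do 2!apply: sumr_ge0 => ? _.
exists (m%:R * MB + 1); first by have := mulr_ge0 (ler0n _ m) MB_ge0; lra.
move=> v; set w := v *m A.
have vE : v = w *m B by rewrite /w -mulmxA AB mulmx1.
have coord_bound a : `|v 0 a| <= MB * \sum_b `|w 0 b|.
  rewrite vE mxE; apply: le_trans (ler_norm_sum _ _ _) _.
  rewrite mulr_sumr; apply: ler_sum => b _; rewrite normrM mulrC ler_wpM2r //.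
  rewrite /MB (bigD1 a) //= (bigD1 b) //= -addrA lerDl.
  by apply: addr_ge0; apply: sumr_ge0 => *; last apply: sumr_ge0.
apply: le_trans (ler_sum _ (fun a _ => coord_bound a)) _.
rewrite sumr_const card_ord -[_ *+ m]mulr_natl mulrDl mul1r mulrA lerDl.
exact: sumr_ge0.
Qed.

Lemma injective_linear_l1_bound (T J : finType) (L : (T -> R) -> J -> R) :
  (forall a x y j, L (fun z => a * x z + y z) j = a * L x j + L y j) ->
  (forall x, (forall j, L x j = 0) -> forall z, x z = 0) ->
  exists2 C, 0 < C & forall x, \sum_z `|x z| <= C * \sum_j `|L x j|.
Proof.
move=> L_lin L_inj.
have sum_enum (U : finType) (G : U -> R) : \sum_u G u = \sum_(a < #|U|) G (enum_val a).
  by rewrite -(big_enum_val (A := U)); apply: eq_bigl => z; rewrite inE.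
pose toF (v : 'rV[R]_#|T|) z := v 0 (enum_rank z).
pose F (v : 'rV[R]_#|T|) : 'rV[R]_#|J| := \row_b L (toF v) (enum_val b).
have F_lin a u v : F (a *: u + v) = a *: F u + F v.
  apply/rowP => b; rewrite !mxE -L_lin; congr L.
  by apply/funext => z; rewrite /toF !mxE.
have F0 : F 0 = 0.
  apply: (addrI (F 0)); rewrite addr0 -{1}(scale1r (F 0)) -F_lin.
  by rewrite scaler0 addr0.
have F_sum (s : seq 'I_#|T|) (c : 'I_#|T| -> R) :
    F (\sum_(a <- s) c a *: delta_mx 0 a) = \sum_(a <- s) c a *: F (delta_mx 0 a).
  elim: s => [|a s IH]; first by rewrite !big_nil F0.
  by rewrite !big_cons F_lin IH.
pose A : 'M[R]_(#|T|, #|J|) := \matrix_(a, b) F (delta_mx 0 a) 0 b.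
have FA v : v *m A = F v.
  rewrite {2}(row_sum_delta v) F_sum; apply/rowP => b.
  by rewrite !mxE summxE; apply: eq_bigr => a _; rewrite !mxE.
have A_free : row_free A.
  apply/inj_row_free => v; rewrite FA => Fv0; apply/rowP => a; rewrite mxE.
  have := L_inj (toF v) _ (enum_val a); rewrite /toF enum_valK; apply => j.
  by have := congr1 (fun w : 'rV[R]_#|J| => w 0 (enum_rank j)) Fv0; rewrite !mxE enum_rankK.
have [C C_gt0 HC] := row_free_l1_bound A_free.
exists C => // x; pose v : 'rV[R]_#|T| := \row_a x (enum_val a).
have -> : x = toF v by apply/funext => z; rewrite /toF mxE enum_rankK.
have -> : \sum_z `|toF v z| = \sum_a `|v 0 a|.
  by rewrite sum_enum; apply: eq_bigr => a _; rewrite /toF enum_valK.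
have -> : \sum_j `|L (toF v) j| = \sum_b `|(v *m A) 0 b|.
  by rewrite sum_enum FA; apply: eq_bigr => b _; rewrite mxE.
exact: HC.
Qed.

End FiniteLinearAlgebra.

Section Vectors.
Variable R : realType.
Implicit Types (u v w : 'rV[R]_3) (f g : vpoly R).

Lemma dot3_0l w : dot3 0 w = 0.
Proof. by rewrite /dot3 big1 // => c _; rewrite mxE mul0r. Qed.

Lemma dot3Dl u v w : dot3 (u + v) w = dot3 u w + dot3 v w.
Proof. by rewrite /dot3 -big_split; apply: eq_bigr => c _; rewrite mxE mulrDl. Qed.

Lemma dot3Nl u w : dot3 (- u) w = - dot3 u w.
Proof. by rewrite /dot3 -sumrN; apply: eq_bigr => c _; rewrite mxE mulNr. Qed.

Lemma dot3Bl u v w : dot3 (u - v) w = dot3 u w - dot3 v w.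
Proof. by rewrite dot3Dl dot3Nl. Qed.

Lemma dot3_suml (I : finType) (P : pred I) (x : I -> 'rV[R]_3) w :
  dot3 (\sum_(i | P i) x i) w = \sum_(i | P i) dot3 (x i) w.
Proof.
rewrite /dot3; under eq_bigr do rewrite summxE mulr_suml.
exact: exchange_big.
Qed.

Lemma sum_dot3_0l (I : finType) (x : I -> 'rV[R]_3) : \sum_i dot3 0 (x i) = 0.
Proof. by rewrite big1 // => i _; exact: dot3_0l. Qed.

Lemma dot3_scale_delta a (c0 : 'I_3) w : dot3 (a *: 'e_c0) w = a * w 0 c0.
Proof.
rewrite /dot3 (bigD1 c0) //= big1 => [|c /negbTE c_neq]; rewrite !mxE ?eqxx ?c_neq /=.
  by rewrite mulr1 addr0.
by rewrite mulr0 mul0r.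
Qed.

Lemma sqn3_ge0 u : 0 <= sqn3 u.
Proof. by apply: sumr_ge0 => c _; rewrite -expr2 sqr_ge0. Qed.

Lemma sqn3_eq0 u : (sqn3 u == 0) = (u == 0).
Proof.
rewrite psumr_eq0 => [|c _]; last by rewrite -expr2 sqr_ge0.
apply/allP/eqP => [u0|-> c _]; last by rewrite /= mxE mul0r.
apply/rowP => c; rewrite mxE; apply/eqP.
by have := u0 c (mem_index_enum c); rewrite mulf_eq0 orbb.
Qed.

Lemma sqn3_le (u : 'rV[R]_3) S : (forall c, `|u 0 c| <= S) -> sqn3 u <= 3%:R * S ^+ 2.
Proof.
move=> u_S; have -> : 3%:R * S ^+ 2 = \sum_(c < 3) S ^+ 2.
  by rewrite sumr_const card_ord mulr_natl.
apply: ler_sum => c _.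
by rewrite -expr2 -real_normK ?num_real // lerXn2r ?nnegrE // (le_trans _ (u_S c)).
Qed.

Lemma veval0 s : veval (fun _ => 0 : {poly R}) s = 0.
Proof. by apply/rowP => c; rewrite !mxE horner0. Qed.

Lemma veval_delta (c0 : 'I_3) (p : {poly R}) s :
  veval (fun c => if c == c0 then p else 0) s = p.[s] *: 'e_c0.
Proof.
apply/rowP => c; rewrite !mxE; case: eqP => _ /=; first by rewrite mulr1.
by rewrite horner0 mulr0.
Qed.

Lemma dot3_veval f g s : dot3 (veval f s) (veval g s) = (\sum_c f c * g c).[s].
Proof. by rewrite horner_sum; apply: eq_bigr => c _; rewrite !mxE hornerM. Qed.

Definition vcross u f : vpoly R := fun c =>
  let x j := u 0 (inord j) in
  let y j := f (inord j) in
  [:: x 1%N *: y 2%N - x 2%N *: y 1%N;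
      x 2%N *: y 0%N - x 0%N *: y 2%N;
      x 0%N *: y 1%N - x 1%N *: y 0%N]`_c.

Lemma vcrossE u f s c : cross3 u (veval f s) 0 c = (vcross u f c).[s].
Proof. by rewrite mxE; case: c => [[|[|[|//]]] ?] /=; rewrite !mxE !hornerE. Qed.

Lemma vcross0 u c : vcross u (fun _ => 0) c = 0.
Proof. by rewrite /vcross; case: c => [[|[|[|//]]] ?] /=; rewrite !scaler0 subr0. Qed.

Lemma vcross_linear u a f g c :
  vcross u (fun c => a *: f c + g c) c = a *: vcross u f c + vcross u g c.
Proof.
rewrite /vcross; case: c => [[|[|[|//]]] ?] /=; apply/polyP => m;
  by rewrite !(coefD, coefN, coefZ); ring.
Qed.

End Vectors.

Section SquaredNorms.
Variable R : realType.
Implicit Types (l : R) (f : vpoly R).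

Lemma L2sq_ge0 l f : 0 <= L2sq l f.
Proof. by apply: Rintegral_ge0 => s _; exact: sqn3_ge0. Qed.

Lemma H1sq_ge0 l f : 0 <= H1sq l f.
Proof. by rewrite addr_ge0 ?L2sq_ge0. Qed.

Lemma L2sq_Ipoly l f : L2sq l f = \sum_c Ipoly l (f c * f c).
Proof.
rewrite -linear_sum /L2sq /Ipoly; congr Int0; apply/funext => s; exact: dot3_veval.
Qed.

Lemma L2sq_eq0 l f : 0 < l -> L2sq l f = 0 -> forall c, f c = 0.
Proof.
move=> l_gt0; rewrite L2sq_Ipoly => /eqP; rewrite psumr_eq0 => [/allP f0 c|c _].
  exact/(Ipoly_sqr_eq0 l_gt0)/eqP/(f0 c (mem_index_enum c)).
exact: Ipoly_sqr_ge0.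
Qed.

Lemma H1sq_eq0 l f : 0 < l -> H1sq l f = 0 -> forall c, f c = 0.
Proof.
move=> l_gt0 /eqP; rewrite paddr_eq0 ?L2sq_ge0 // => /andP[/eqP f0 _].
exact: L2sq_eq0 f0.
Qed.

Lemma L2sq_le l (f : vpoly R) M : 0 <= l ->
  (forall c s, 0 <= s <= l -> `|(f c).[s]| <= M) -> L2sq l f <= 3%:R * M ^+ 2 * l.
Proof.
move=> l_ge0 f_M; rewrite L2sq_Ipoly -mulrA.
have M_ge0 : 0 <= M by rewrite (le_trans _ (f_M ord0 0 _)) // lexx.
have -> : 3%:R * (M ^+ 2 * l) = \sum_(c < 3) M ^+ 2 * l.
  by rewrite sumr_const card_ord mulr_natl.
apply: ler_sum => c _; rewrite -IpolyC //; apply: Ipoly_le => s s_in.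
rewrite hornerM hornerC -expr2 -real_normK ?num_real // lerXn2r ?nnegrE //.
exact: f_M.
Qed.

Lemma H1sq_coef_bound l L n B (f : vpoly R) : 0 <= l <= L -> 1 <= L ->
  (forall c, (size (f c) <= n)%N) -> (forall c i, `|(f c)`_i| <= B) ->
  H1sq l f <= 6%:R * (n%:R ^+ 2 * B * L ^+ n) ^+ 2 * L.
Proof.
move=> /andP[l_ge0 l_L] L_ge1 f_n f_B.
have B_ge0 : 0 <= B := le_trans (normr_ge0 _) (f_B ord0 0%N).
have LXn_ge0 : 0 <= L ^+ n by rewrite exprn_ge0 //; lra.
have n_le_n2 : n%:R <= n%:R ^+ 2 :> R.
  by rewrite -natrX ler_nat; case: (n) => // m; rewrite expnS expn1 leq_pmulr.
set M := n%:R ^+ 2 * B * L ^+ n.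
have f_M c s : 0 <= s <= l -> `|(f c).[s]| <= M.
  move=> /andP[s_ge0 s_l]; have s_L : 0 <= s <= L by rewrite s_ge0 (le_trans s_l).
  apply: le_trans (horner_coef_bound (f_n c) (f_B c) s_L L_ge1) _.
  by rewrite ler_wpM2r // ler_wpM2r.
have f'_M c s : 0 <= s <= l -> `|((f c)^`()).[s]| <= M.
  move=> /andP[s_ge0 s_l]; have s_L : 0 <= s <= L by rewrite s_ge0 (le_trans s_l).
  have f'_n : (size (f c)^`() <= n)%N.
    by rewrite size_deriv (leq_trans (leq_pred _) (f_n c)).
  apply: le_trans (horner_coef_bound f'_n (deriv_coef_bound (f_n c) (f_B c)) s_L L_ge1) _.
  by rewrite /M mulrA -expr2.
have M2_ge0 : 0 <= M ^+ 2 := sqr_ge0 M.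
have := L2sq_le l_ge0 f_M; have := L2sq_le (f := vderiv f) l_ge0 f'_M.
rewrite /H1sq; nra.
Qed.

End SquaredNorms.

Section NormPositivity.
Variable R : realType.
Variables (nV nE : nat) (ell : 'I_nE -> R).
Hypothesis ell_gt0 : forall i, 0 < ell i.

Lemma normM_gt0 (P : Mel R nV nE) : ~ Mzero P -> 0 < normM ell P.
Proof.
move=> P_neq0.
have edge_ge0 i : 0 <= H1sq (ell i) (Mv P i) + H1sq (ell i) (Mw P i).
  by rewrite addr_ge0 ?H1sq_ge0.
have node_ge0 j : 0 <= sqn3 (MV P j) + sqn3 (MW P j) by rewrite addr_ge0 ?sqn3_ge0.
rewrite sqrtr_gt0 lt_def addr_ge0 ?sumr_ge0 // andbT paddr_eq0 ?sumr_ge0 //.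
apply: contra_notN P_neq0 => /andP[/eqP edges0 /eqP nodes0].
have {}edges0 := psumr_eq0P (fun i _ => edge_ge0 i) edges0.
have {}nodes0 := psumr_eq0P (fun j _ => node_ge0 j) nodes0.
have edge0 i : H1sq (ell i) (Mv P i) = 0 /\ H1sq (ell i) (Mw P i) = 0.
  have /eqP := edges0 i isT.
  by rewrite paddr_eq0 ?H1sq_ge0 // => /andP[/eqP-> /eqP->].
have node0 j : MV P j = 0 /\ MW P j = 0.
  have /eqP := nodes0 j isT.
  by rewrite paddr_eq0 ?sqn3_ge0 // !sqn3_eq0 => /andP[/eqP-> /eqP->].
split=> [i|i|j|j].
- exact: H1sq_eq0 (ell_gt0 i) (edge0 i).1.
- exact: H1sq_eq0 (ell_gt0 i) (edge0 i).2.
- exact: (node0 j).1.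
- exact: (node0 j).2.
Qed.

Lemma normV_gt0 (S : Vel R nE) : ~ Vzero S -> 0 < normV ell S.
Proof.
move=> S_neq0.
have edge_ge0 i : 0 <= L2sq (ell i) (Vq S i) + L2sq (ell i) (Vp S i).
  by rewrite addr_ge0 ?L2sq_ge0.
have end_ge0 i : 0 <= sqn3 (VPp S i) + sqn3 (VPm S i) + sqn3 (VQp S i) + sqn3 (VQm S i).
  by rewrite !addr_ge0 ?sqn3_ge0.
have edges_ge0 := sumr_ge0 _ (fun i _ => edge_ge0 i).
have ends_ge0 := sumr_ge0 _ (fun i _ => end_ge0 i).
rewrite sqrtr_gt0 lt_def !addr_ge0 ?sqn3_ge0 // andbT.
rewrite !paddr_eq0 ?addr_ge0 ?sqn3_ge0 // !sqn3_eq0.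
apply: contra_notN S_neq0.
move=> /andP[/andP[/andP[/eqP edges0 /eqP ends0] /eqP alpha0] /eqP beta0].
have {}edges0 := psumr_eq0P (fun i _ => edge_ge0 i) edges0.
have {}ends0 := psumr_eq0P (fun i _ => end_ge0 i) ends0.
have edge0 i : L2sq (ell i) (Vq S i) = 0 /\ L2sq (ell i) (Vp S i) = 0.
  have /eqP := edges0 i isT.
  by rewrite paddr_eq0 ?L2sq_ge0 // => /andP[/eqP-> /eqP->].
have end0 i : [/\ VPp S i = 0, VPm S i = 0, VQp S i = 0 & VQm S i = 0].
  have /eqP := ends0 i isT.
  rewrite !paddr_eq0 ?addr_ge0 ?sqn3_ge0 // !sqn3_eq0.
  by case/andP => /andP[/andP[/eqP-> /eqP->] /eqP->] /eqP->.
repeat split => //; move=> i; try by case: (end0 i).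
- exact: L2sq_eq0 (ell_gt0 i) (edge0 i).1.
- exact: L2sq_eq0 (ell_gt0 i) (edge0 i).2.
Qed.

End NormPositivity.

Section ConnectedNetwork.
Variable R : realType.
Variables (nV nE : nat) (src tgt : 'I_nE -> 'I_nV) (ell : 'I_nE -> R).

Lemma connected_const (T : eqType) (f : 'I_nV -> T) :
  graph_connected src tgt -> (forall i, f (src i) = f (tgt i)) -> forall u v, f u = f v.
Proof.
move=> conn f_edge u v.
have closed_f : fingraph.closed (adj src tgt) [pred w | f w == f u].
  move=> x y /existsP[i /orP[/andP[/eqP <- /eqP <-]|/andP[/eqP <- /eqP <-]]];
  by rewrite !inE f_edge.
by have := closed_connect closed_f (conn u v); rewrite !inE eqxx => /esym/eqP.
Qed.

Lemma edge_node_eq0 (u : 'I_nE -> vpoly R) (U : 'I_nV -> 'rV[R]_3) :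
  graph_connected src tgt -> (0 < nE)%N -> (forall i, 0 < ell i) ->
  (forall i c, (u i c)^`() = 0) ->
  (forall i c, (u i c).[ell i] = U (tgt i) 0 c) ->
  (forall i c, (u i c).[0] = U (src i) 0 c) ->
  (forall c, \sum_i Ipoly (ell i) (u i c) = 0) ->
  (forall i c, u i c = 0) /\ (forall j, U j = 0).
Proof.
move=> conn nE_gt0 ell_gt0 u'0 u_tgt u_src u_mean.
have u_const i c : u i c = (U (src i) 0 c)%:P.
  by rewrite {1}(deriv_eq0_polyC (u'0 i c)) -horner_coef0 u_src.
have U_edge i : U (src i) = U (tgt i).
  by apply/rowP => c; rewrite -u_tgt -u_src u_const !hornerC.
pose j0 := src (Ordinal nE_gt0).
have U_j0 j : U j = U j0 := connected_const conn U_edge j j0.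
have sum_ell_gt0 : 0 < \sum_i ell i.
  rewrite (bigD1 (Ordinal nE_gt0)) //= ltr_pwDl //.
  by apply: sumr_ge0 => i _; exact: ltW.
have U0 : U j0 = 0.
  apply/rowP => c; rewrite mxE; apply: (mulIf (lt0r_neq0 sum_ell_gt0)).
  rewrite mul0r -[RHS](u_mean c) mulr_sumr; apply: eq_bigr => i _.
  by rewrite u_const U_j0 IpolyC // ltW.
by split => [i c|j]; rewrite ?u_const U_j0 U0 ?mxE.
Qed.

End ConnectedNetwork.

Section TestFunctionals.
Variable R : realType.
Variables (nV nE : nat) (src tgt : 'I_nE -> 'I_nV) (ell : 'I_nE -> R)
  (t : 'I_nE -> 'rV[R]_3) (k : nat).

(* Coordinates on M_{k+1}: the coefficient of X^m in component c of v^i (false) or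
   w^i (true), and component c of V_j (false) or W_j (true). *)
Local Notation Mindex := ((('I_nE * bool) * 'I_3) * 'I_k.+2 + ('I_nV * bool) * 'I_3)%type.

Definition Medge (P : Mel R nV nE) (b : bool) i := if b then Mw P i else Mv P i.
Definition Mnode (P : Mel R nV nE) (b : bool) j := if b then MW P j else MV P j.

Definition Mcoords (P : Mel R nV nE) (z : Mindex) : R :=
  match z with
  | inl (i, b, c, m) => (Medge P b i c)`_m
  | inr (j, b, c) => Mnode P b j 0 c
  end.

Definition Mel_of_coords (x : Mindex -> R) : Mel R nV nE :=
  mkMel (fun i c => \poly_(m < k.+2) x (inl (i, false, c, inord m)))
        (fun i c => \poly_(m < k.+2) x (inl (i, true, c, inord m)))
        (fun j => \row_c x (inr (j, false, c)))
        (fun j => \row_c x (inr (j, true, c))).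

Arguments Mel_of_coords : simpl never.

Lemma Mel_of_coords_in_Mn x : in_Mn k.+1 (Mel_of_coords x).
Proof. by move=> i; split => c; apply: size_poly. Qed.

Lemma Mel_of_coordsK P : in_Mn k.+1 P -> Mel_of_coords (Mcoords P) = P.
Proof.
case: P => v w V W P_in; rewrite /Mel_of_coords /=; congr mkMel.
- apply/funext => i; apply/funext => c; apply/polyP => m; rewrite coef_poly.
  case: ltnP => m_k /=; first by rewrite inordK.
  by rewrite nth_default // (leq_trans ((P_in i).1 c) m_k).
- apply/funext => i; apply/funext => c; apply/polyP => m; rewrite coef_poly.
  case: ltnP => m_k /=; first by rewrite inordK.
  by rewrite nth_default // (leq_trans ((P_in i).2 c) m_k).
- by apply/funext => j; apply/rowP => c; rewrite mxE.
- by apply/funext => j; apply/rowP => c; rewrite mxE.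
Qed.

(* Indices of the test elements of V_k: the monomial a X^m e_c in p^i (false) or q^i
   (true); the vector a e_c in P^i_+- (false) or Q^i_+- (true), the second boolean
   choosing the sign (true for +); a e_c in alpha (false) or beta (true). *)
Local Notation Vindex :=
  ((('I_nE * bool) * 'I_3) * 'I_k.+1 + ((('I_nE * bool) * bool) * 'I_3 + bool * 'I_3))%type.

Definition single_vpoly (i0 : 'I_nE) (c0 : 'I_3) (p : {poly R}) : 'I_nE -> vpoly R :=
  fun i c => if (i == i0) && (c == c0) then p else 0.
Definition single_vec (i0 : 'I_nE) (r : 'rV[R]_3) : 'I_nE -> 'rV[R]_3 :=
  fun i => if i == i0 then r else 0.

Local Notation no_vpoly := (fun _ _ => 0 : {poly R}).
Local Notation no_vec := (fun _ => 0 : 'rV[R]_3).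

Definition test (j : Vindex) (a : R) : Vel R nE :=
  match j with
  | inl (i, false, c, m) =>
      mkVel no_vpoly (single_vpoly i c (a *: 'X^m)) no_vec no_vec no_vec no_vec 0 0
  | inl (i, true, c, m) =>
      mkVel (single_vpoly i c (a *: 'X^m)) no_vpoly no_vec no_vec no_vec no_vec 0 0
  | inr (inl (i, false, true, c)) =>
      mkVel no_vpoly no_vpoly (single_vec i (a *: 'e_c)) no_vec no_vec no_vec 0 0
  | inr (inl (i, false, false, c)) =>
      mkVel no_vpoly no_vpoly no_vec (single_vec i (a *: 'e_c)) no_vec no_vec 0 0
  | inr (inl (i, true, true, c)) =>
      mkVel no_vpoly no_vpoly no_vec no_vec (single_vec i (a *: 'e_c)) no_vec 0 0
  | inr (inl (i, true, false, c)) =>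
      mkVel no_vpoly no_vpoly no_vec no_vec no_vec (single_vec i (a *: 'e_c)) 0 0
  | inr (inr (false, c)) =>
      mkVel no_vpoly no_vpoly no_vec no_vec no_vec no_vec (a *: 'e_c) 0
  | inr (inr (true, c)) =>
      mkVel no_vpoly no_vpoly no_vec no_vec no_vec no_vec 0 (a *: 'e_c)
  end.

Definition btest (j : Vindex) (P : Mel R nV nE) : R :=
  match j with
  | inl (i, false, c, m) =>
      - Ipoly (ell i) ('X^m * ((Mv P i c)^`() + vcross (t i) (Mw P i) c))
  | inl (i, true, c, m) => - Ipoly (ell i) ('X^m * (Mw P i c)^`())
  | inr (inl (i, false, true, c)) => (Mv P i c).[ell i] - MV P (tgt i) 0 c
  | inr (inl (i, false, false, c)) => MV P (src i) 0 c - (Mv P i c).[0]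
  | inr (inl (i, true, true, c)) => (Mw P i c).[ell i] - MW P (tgt i) 0 c
  | inr (inl (i, true, false, c)) => MW P (src i) 0 c - (Mw P i c).[0]
  | inr (inr (false, c)) => \sum_i Ipoly (ell i) (Mv P i c)
  | inr (inr (true, c)) => \sum_i Ipoly (ell i) (Mw P i c)
  end.

Lemma test_in_Vk j a : in_Vk k (test j a).
Proof.
have no_deg (i : 'I_nE) : vdeg_le k (no_vpoly i) by move=> c; rewrite size_poly0.
have single_deg i0 c0 (m : 'I_k.+1) i : vdeg_le k (single_vpoly i0 c0 (a *: 'X^m) i).
  move=> c; rewrite /single_vpoly; case: ifP => _; last by rewrite size_poly0.
  by rewrite (leq_trans (size_scale_leq _ _)) // size_polyXn.
by move=> i; case: j => [[[[? []] ?] ?]|[[[[? []] []] ?]|[[] ?]]] /=;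
  split; exact: no_deg || exact: single_deg.
Qed.

Lemma test_neq0 j a : a != 0 -> ~ Vzero (test j a).
Proof.
move=> a_neq0.
have vec_neq0 (c : 'I_3) : a *: 'e_c != 0 :> 'rV[R]_3.
  apply: contraNneq a_neq0 => /(congr1 (fun r : 'rV[R]_3 => r 0 c)).
  by rewrite !mxE !eqxx mulr1 => ->.
have mono_neq0 (m : nat) : a *: 'X^m != 0 :> {poly R}.
  by rewrite scaler_eq0 negb_or a_neq0 monic_neq0 ?monicXn.
case: j => [[[[i []] c] m]|[[[[i []] []] c]|[[] c]]] /=.
all: move=> -[q0 [p0 [Pp0 [Pm0 [Qp0 [Qm0 [a0 b0]]]]]]].
- by have /eqP := q0 i c; rewrite /= /single_vpoly !eqxx /= (negbTE (mono_neq0 m)).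
- by have /eqP := p0 i c; rewrite /= /single_vpoly !eqxx /= (negbTE (mono_neq0 m)).
- by have /eqP := Qp0 i; rewrite /= /single_vec eqxx (negbTE (vec_neq0 c)).
- by have /eqP := Qm0 i; rewrite /= /single_vec eqxx (negbTE (vec_neq0 c)).
- by have /eqP := Pp0 i; rewrite /= /single_vec eqxx (negbTE (vec_neq0 c)).
- by have /eqP := Pm0 i; rewrite /= /single_vec eqxx (negbTE (vec_neq0 c)).
- by have /eqP := b0; rewrite /= (negbTE (vec_neq0 c)).
- by have /eqP := a0; rewrite /= (negbTE (vec_neq0 c)).
Qed.

Lemma sum_Int0_single i0 (f : 'I_nE -> R -> R) :
  (forall i s, i != i0 -> f i s = 0) -> \sum_i Int0 (ell i) (f i) = Int0 (ell i0) (f i0).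
Proof.
by move=> f0; apply: big_only1 => // i i_neq _; apply: Int0_eq0 => s; exact: f0.
Qed.

Lemma sum_Int0_eq0 (f : 'I_nE -> R -> R) :
  (forall i s, f i s = 0) -> \sum_i Int0 (ell i) (f i) = 0.
Proof. by move=> f0; rewrite big1 // => i _; apply: Int0_eq0. Qed.

Lemma veval_single_vpoly i0 c0 p i s :
  veval (single_vpoly i0 c0 p i) s = if i == i0 then p.[s] *: 'e_c0 else 0.
Proof.
rewrite /single_vpoly; case: (i == i0) => /=; first exact: veval_delta.
exact: veval0.
Qed.

Lemma sum_dot3_single i0 r (x : 'I_nE -> 'rV[R]_3) :
  \sum_i dot3 (single_vec i0 r i) (x i) = dot3 r (x i0).
Proof.
rewrite (@big_only1 _ _ _ _ i0) // => [|i /negbTE i_neq _].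
  by rewrite /single_vec eqxx.
by rewrite /single_vec i_neq dot3_0l.
Qed.

Lemma sum_dot3_incidence (f : 'I_nE -> 'I_nV) (x : 'I_nE -> 'rV[R]_3) V :
  \sum_j dot3 (\sum_(i | f i == j) x i) (V j) = \sum_i dot3 (x i) (V (f i)).
Proof.
rewrite (partition_big f xpredT) //; apply: eq_bigr => j _.
by rewrite dot3_suml; apply: eq_bigr => i /eqP ->.
Qed.

Lemma sum_dot3_AplusAminus (x y : 'I_nE -> 'rV[R]_3) V :
  \sum_j dot3 (Aplus tgt x j - Aminus src y j) (V j) =
  \sum_i dot3 (x i) (V (tgt i)) - \sum_i dot3 (y i) (V (src i)).
Proof.
by rewrite -!sum_dot3_incidence -sumrB; apply: eq_bigr => j _; rewrite dot3Bl.
Qed.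

Lemma dot3_sum_vInt0 a c0 (f : 'I_nE -> vpoly R) :
  dot3 (a *: 'e_c0) (\sum_i vInt0 (ell i) (f i)) = a * \sum_i Ipoly (ell i) (f i c0).
Proof.
by rewrite dot3_scale_delta summxE; congr (_ * _); apply: eq_bigr => i _; rewrite mxE.
Qed.

Lemma bform_test j a P : bform src tgt ell t (test j a) P = a * btest j P.
Proof.
rewrite /bform !sum_dot3_AplusAminus.
case: j => [[[[i0 []] c0] m]|[[[[i0 []] []] c0]|[[] c0]]] /=;
  rewrite ?sumrB ?sum_dot3_0l ?sum_dot3_single ?dot3_sum_vInt0 ?dot3_0l.
- rewrite (sum_Int0_single (i0 := i0)) => [|i s /negbTE i_neq]; last first.
    by rewrite veval_single_vpoly i_neq veval0 !dot3_0l subr0 oppr0.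
  rewrite (@Int0_Ipoly _ _ _ (- (a *: ('X^m * (Mw P i0 c0)^`())))) => [|s].
    by rewrite raddfN /= IpolyZ; ring.
  rewrite veval_single_vpoly eqxx veval0 dot3_0l dot3_scale_delta mxE /vderiv.
  by rewrite !(hornerN, hornerZ, hornerM, hornerXn); ring.
- rewrite (sum_Int0_single (i0 := i0)) => [|i s /negbTE i_neq]; last first.
    by rewrite veval_single_vpoly i_neq veval0 !dot3_0l subr0 oppr0.
  rewrite (@Int0_Ipoly _ _ _
    (- (a *: ('X^m * ((Mv P i0 c0)^`() + vcross (t i0) (Mw P i0) c0))))) => [|s].
    by rewrite raddfN /= IpolyZ; ring.
  rewrite veval_single_vpoly eqxx veval0 dot3_0l dot3_scale_delta.
  rewrite mxE vcrossE mxE /vderiv.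
  by rewrite !(hornerN, hornerZ, hornerM, hornerXn, hornerD); ring.
all: rewrite sum_Int0_eq0 => [|i s]; last by rewrite !veval0 !dot3_0l subr0 oppr0.
all: by rewrite ?dot3_scale_delta ?mxE; ring.
Qed.

Lemma btest_linear j a x y :
  btest j (Mel_of_coords (fun z => a * x z + y z)) =
  a * btest j (Mel_of_coords x) + btest j (Mel_of_coords y).
Proof.
set Pxy := Mel_of_coords _; set Px := Mel_of_coords x; set Py := Mel_of_coords y.
have Mv_lin i : Mv Pxy i = fun c => a *: Mv Px i c + Mv Py i c.
  by apply/funext => c; exact: poly_combination.
have Mw_lin i : Mw Pxy i = fun c => a *: Mw Px i c + Mw Py i c.
  by apply/funext => c; exact: poly_combination.
have MV_lin j' : MV Pxy j' = a *: MV Px j' + MV Py j' by apply/rowP => c; rewrite !mxE.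
have MW_lin j' : MW Pxy j' = a *: MW Px j' + MW Py j' by apply/rowP => c; rewrite !mxE.
case: j => [[[[i []] c] m]|[[[[i []] []] c]|[[] c]]];
  rewrite /btest ?Mv_lin ?Mw_lin ?MV_lin ?MW_lin /=.
- by rewrite derivD derivZ mulrDr -scalerAr IpolyD IpolyZ; ring.
- rewrite vcross_linear derivD derivZ addrACA -scalerDr mulrDr -scalerAr IpolyD IpolyZ.
  by ring.
all: try by rewrite ?hornerD ?hornerZ !mxE; ring.
all: under eq_bigr do rewrite poly_combination IpolyD IpolyZ.
all: by rewrite big_split -mulr_sumr.
Qed.

Lemma btest_kernel P : graph_connected src tgt -> (0 < nE)%N -> (forall i, 0 < ell i) ->
  in_Mn k.+1 P -> (forall j, btest j P = 0) -> Mzero P.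
Proof.
move=> conn nE_gt0 ell_gt0 P_in P_ker.
have w'0 i c : (Mw P i c)^`() = 0.
  apply: (Ipoly_orth_eq0 (ell_gt0 i) (size_deriv_leq ((P_in i).2 c))) => m.
  by apply/eqP; rewrite -oppr_eq0; apply/eqP/(P_ker (inl (i, true, c, m))).
have [w0 W0] := edge_node_eq0 conn nE_gt0 ell_gt0 w'0
  (fun i c => subr0_eq (P_ker (inr (inl (i, true, true, c)))))
  (fun i c => esym (subr0_eq (P_ker (inr (inl (i, true, false, c))))))
  (fun c => P_ker (inr (inr (true, c)))).
have w_eq0 i : Mw P i = fun _ => 0 by apply/funext => c; exact: w0.
have v'0 i c : (Mv P i c)^`() = 0.
  apply: (Ipoly_orth_eq0 (ell_gt0 i) (size_deriv_leq ((P_in i).1 c))) => m.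
  have := P_ker (inl (i, false, c, m)); rewrite /= w_eq0 vcross0 addr0.
  by move/eqP; rewrite oppr_eq0 => /eqP.
have [v0 V0] := edge_node_eq0 conn nE_gt0 ell_gt0 v'0
  (fun i c => subr0_eq (P_ker (inr (inl (i, false, true, c)))))
  (fun i c => esym (subr0_eq (P_ker (inr (inl (i, false, false, c))))))
  (fun c => P_ker (inr (inr (false, c)))).
by split.
Qed.

Lemma btest_coords_injective x :
  graph_connected src tgt -> (0 < nE)%N -> (forall i, 0 < ell i) ->
  (forall j, btest j (Mel_of_coords x) = 0) -> forall z, x z = 0.
Proof.
move=> conn nE_gt0 ell_gt0 x_ker.
have [v0 w0 V0 W0] := btest_kernel conn nE_gt0 ell_gt0 (Mel_of_coords_in_Mn x) x_ker.
case=> [[[[i []] c] m]|[[j []] c]].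
- have /(congr1 (fun p : {poly R} => p`_m)) := w0 i c.
  by rewrite coef_poly ltn_ord inord_val coef0.
- have /(congr1 (fun p : {poly R} => p`_m)) := v0 i c.
  by rewrite coef_poly ltn_ord inord_val coef0.
- by have /rowP/(_ c) := W0 j; rewrite !mxE.
- by have /rowP/(_ c) := V0 j; rewrite !mxE.
Qed.

Lemma normM_coords_bound : (forall i, 0 < ell i) -> exists2 K, 0 < K &
  forall P, in_Mn k.+1 P -> normM ell P <= K * \sum_z `|Mcoords P z|.
Proof.
move=> ell_gt0; pose L := 1 + \sum_i ell i.
have sum_ell_ge0 : 0 <= \sum_i ell i by apply: sumr_ge0 => i _; exact: ltW.
have L_ge1 : 1 <= L by rewrite /L lerDl.
have ell_L i : 0 <= ell i <= L.
  rewrite ltW //= /L (bigD1 i) //= addrCA lerDl addr_ge0 //.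
  by apply: sumr_ge0 => j _; exact: ltW.
pose n := k.+2; pose c1 := n%:R ^+ 2 * L ^+ n.
pose K2 := nE%:R * (12%:R * c1 ^+ 2 * L) + nV%:R * 6%:R.
have L_ge0 : 0 <= L by lra.
have K2_ge0 : 0 <= K2.
  apply: addr_ge0; apply: mulr_ge0; rewrite ?ler0n //.
  by rewrite mulr_ge0 // mulr_ge0 ?ler0n ?sqr_ge0.
exists (Num.sqrt K2 + 1); first by have := sqrtr_ge0 K2; lra.
move=> P P_in; set S := \sum_z _.
have S_ge0 : 0 <= S by apply: sumr_ge0.
have coef_S b i c m : `|(Medge P b i c)`_m| <= S.
  case: (ltnP m n) => [m_n|n_m].
    exact: (ler_psum_term (fun z => normr_ge0 (Mcoords P z)) (inl (i, b, c, Ordinal m_n))).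
  have size_n : (size (Medge P b i c) <= n)%N.
    by case: (P_in i) => Pv Pw; case: b; [exact: Pw | exact: Pv].
  by rewrite nth_default ?normr0 // (leq_trans size_n n_m).
have node_S b j c : `|Mnode P b j 0 c| <= S.
  exact: (ler_psum_term (fun z => normr_ge0 (Mcoords P z)) (inr (j, b, c))).
have edge_bound b i : H1sq (ell i) (Medge P b i) <= 6%:R * (c1 * S) ^+ 2 * L.
  have -> : c1 * S = n%:R ^+ 2 * S * L ^+ n by rewrite /c1; ring.
  apply: H1sq_coef_bound (ell_L i) L_ge1 _ (coef_S b i).
  by move=> c; case: (P_in i) => Pv Pw; case: b; [exact: Pw | exact: Pv].
have node_bound b j : sqn3 (Mnode P b j) <= 3%:R * S ^+ 2 := sqn3_le (node_S b j).
have arg_bound : \sum_i (H1sq (ell i) (Mv P i) + H1sq (ell i) (Mw P i)) +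
    \sum_j (sqn3 (MV P j) + sqn3 (MW P j)) <= K2 * S ^+ 2.
  have -> : K2 * S ^+ 2 = \sum_(i < nE) (12%:R * (c1 * S) ^+ 2 * L) +
      \sum_(j < nV) (6%:R * S ^+ 2).
    by rewrite !sumr_const !card_ord /K2; ring.
  apply: lerD; apply: ler_sum.
    move=> i _; have := edge_bound false i; have := edge_bound true i.
    by rewrite /Medge /=; lra.
  move=> j _; have := node_bound false j; have := node_bound true j.
  by rewrite /Mnode /=; lra.
apply: le_trans (ler_wsqrtr arg_bound) _.
rewrite sqrtrM // sqrtr_sqr ger0_norm // mulrDl mul1r lerDl //.
Qed.

Lemma btest_dominates_normM :
  graph_connected src tgt -> (0 < nE)%N -> (forall i, 0 < ell i) ->
  exists2 D, 0 < D & forall P, in_Mn k.+1 P -> exists j, normM ell P <= D * `|btest j P|.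
Proof.
move=> conn nE_gt0 ell_gt0.
have [C C_gt0 coords_le] := injective_linear_l1_bound
  (L := fun x j => btest j (Mel_of_coords x)) (fun a x y j => btest_linear j a x y)
  (fun x => btest_coords_injective conn nE_gt0 ell_gt0 (x := x)).
have [K K_gt0 normM_le] := normM_coords_bound ell_gt0.
pose j0 : Vindex := inr (inr (false, ord0)).
have card_gt0 : (0 < #|{: Vindex}|)%N by apply/card_gt0P; exists j0.
exists (K * C * #|{: Vindex}|%:R) => [|P P_in]; first by rewrite !mulr_gt0 ?ltr0n.
have [jm _ jm_max] := @arg_maxP _ R Vindex j0 xpredT (fun j => `|btest j P|) isT.
exists jm; apply: (le_trans (normM_le P P_in)).
rewrite -!mulrA; apply: ler_wpM2l; first exact: ltW.
apply: (le_trans (coords_le (Mcoords P))).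
rewrite (Mel_of_coordsK P_in); apply: ler_wpM2l; first exact: ltW.
apply: (le_trans (ler_sum _ (fun j _ => jm_max j isT))).
by rewrite sumr_const mulr_natl.
Qed.

Lemma normV_test_bound : (forall i, 0 < ell i) ->
  exists2 NB, 0 < NB & forall j (b : bool), 0 < normV ell (test j ((-1) ^+ b)) <= NB.
Proof.
move=> ell_gt0.
have test_gt0 j (b : bool) : 0 < normV ell (test j ((-1) ^+ b)).
  by apply: normV_gt0 => //; apply: test_neq0; rewrite signr_eq0.
pose NB := \sum_(jb : Vindex * bool) normV ell (test jb.1 ((-1) ^+ jb.2)).
have test_le j (b : bool) : normV ell (test j ((-1) ^+ b)) <= NB.
  exact: (ler_psum_term (fun jb => ltW (test_gt0 jb.1 jb.2)) (j, b)).
exists NB => [|j b]; last by rewrite test_gt0 test_le.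
exact: lt_le_trans (test_gt0 (inr (inr (false, ord0))) false) (test_le _ _).
Qed.

End TestFunctionals.

Unset Implicit Arguments.

Theorem corollary4p4 (R : realType) (nV nE : nat)
    (src tgt : 'I_nE -> 'I_nV) (X : 'I_nV -> 'rV[R]_3)
    (ell : 'I_nE -> R) (t : 'I_nE -> 'rV[R]_3) (k : nat) :
  (0 < nE)%N ->
  graph_connected src tgt ->
  straight_struts src tgt X ell t ->
  exists kd : R, 0 < kd /\
    forall P : Mel R nV nE, in_Mn k.+1 P -> ~ Mzero P ->
      (kd%:E <= sup_ratio k src tgt ell t P)%E.
Proof.
move=> nE_gt0 conn struts; have ell_gt0 i : 0 < ell i by case: (struts i).
have [D D_gt0 dominate] := btest_dominates_normM t k conn nE_gt0 ell_gt0.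
have [NB NB_gt0 test_bound] := normV_test_bound k ell_gt0.
exists (NB * D)^-1; split=> [|P P_in P_neq0]; first by rewrite invr_gt0 mulr_gt0.
have [j P_le] := dominate P P_in.
pose S : Vel R nE := test j ((-1) ^+ (btest src tgt ell t j P < 0)%R).
apply: (@le_trans _ _ ((bform src tgt ell t S P / (normV ell S * normM ell P))%:E)).
  rewrite lee_fin /S bform_test -normrEsign.
  by apply: invf_le_ratio (test_bound _ _) D_gt0 _; rewrite normM_gt0.
apply: ereal_sup_ubound; exists S => //; split; first exact: test_in_Vk.
by apply: test_neq0; rewrite signr_eq0.
Qed.
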